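(* Let $\mathsf{K}$ be one of $\mathsf{PSL}$, $\mathsf{ISL}$, $\mathsf{bISL}$, $\mathsf{PDL}$, $\mathsf{IL}$, $\mathsf{HA}$, and let $\mathsf{K}^\partial$ be the associated class of partial maps between posets (defined in the context). For every $\boldsymbol{A},\boldsymbol{B}\in\mathsf{K}$ and all posets $\mathbb{X},\mathbb{Y}$: (i) if $f\colon \boldsymbol{A}\to\boldsymbol{B}$ is a homomorphism, then $f_\ast\colon \boldsymbol{B}_\ast \rightharpoonup \boldsymbol{A}_\ast$ belongs to $\mathsf{K}^\partial$; (ii) if $p\colon\mathbb{X}\rightharpoonup\mathbb{Y}$ belongs to $\mathsf{K}^\partial$, then $\mathsf{Up}_{\mathsf{K}}(p)\colon \mathsf{Up}_{\mathsf{K}}(\mathbb{Y})\to\mathsf{Up}_{\mathsf{K}}(\mathbb{X})$ is a homomorphism. Furthermore, if $f$ is injective then $f_\ast$ is surjective, and if $p$ is surjective then $\mathsf{Up}_{\mathsf{K}}(p)$ is injective.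
   Context: Varieties: $\mathsf{PSL}$ = algebras $\langle A;\land,\lnot,0,1\rangle$ with $\langle A;\land\rangle$ a semilattice (order $a\le b$ iff $a\land b=a$) with minimum $0$, maximum $1$, and $c\land a=0\iff c\le\lnot a$; $\mathsf{ISL}$ = algebras $\langle A;\land,\to,1\rangle$, semilattice with maximum $1$ and $c\land a\le b\iff c\le a\to b$; $\mathsf{bISL}$ = $\langle A;\land,\to,0,1\rangle$ with $\langle A;\land,\to,1\rangle\in\mathsf{ISL}$ and $0$ the minimum; $\mathsf{PDL}$ = $\langle A;\land,\lor,\lnot,0,1\rangle$, distributive lattices whose $\langle\land,\lnot,0,1\rangle$-reduct is in $\mathsf{PSL}$; $\mathsf{IL}$ = $\langle A;\land,\lor,\to,1\rangle$, lattices whose $\langle\land,\to,1\rangle$-reduct is in $\mathsf{ISL}$; $\mathsf{HA}$ = Heyting algebras $\langle A;\land,\lor,\to,0,1\rangle$. For an algebra $\boldsymbol{A}$ in one of these, a filter is a nonempty upset of $\langle A;\le\rangle$ closed under $\land$; it is meet irreducible if it is proper and not the intersection of two filters both different from it; $\boldsymbol{A}_\ast$ is the poset of meet irreducible filters ordered by inclusion. A partial function $p\colon X\rightharpoonup Y$ is a function from a subset $\mathsf{dom}(p)\subseteq X$ to $Y$; it is surjective if its range is $Y$; between posets it is order preserving if $x\le z$ in $\mathsf{dom}(p)$ implies $p(x)\le p(z)$. For posets, ${\uparrow}S,{\downarrow}S$ denote the up/down-closures. An order preserving $p\colon\mathbb{X}\rightharpoonup\mathbb{Y}$ is: a partial negative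 p-morphism if $X={\downarrow}\{x\in X: {\uparrow}x\subseteq\mathsf{dom}(p)\}$ and for all $x\in\mathsf{dom}(p)$, $y\in Y$ with $p(x)\le y$ there is $z\in\mathsf{dom}(p)$ with $x\le z$ and $y\le p(z)$; a partial positive p-morphism if for all $x\in\mathsf{dom}(p)$, $y\in Y$ with $p(x)\le y$ there is $z\in\mathsf{dom}(p)$ with $x\le z$ and $y=p(z)$; a partial p-morphism if both. Dropping ''partial'' means $p$ is total. $p$ is almost total if $\mathsf{dom}(p)$ is a downset. The classes $\mathsf{K}^\partial$ are: $\mathsf{PSL}^\partial$: partial negative p-morphisms; $\mathsf{ISL}^\partial$: partial positive p-morphisms; $\mathsf{bISL}^\partial$: partial p-morphisms; $\mathsf{PDL}^\partial$: (total) negative p-morphisms; $\mathsf{IL}^\partial$: almost total partial positive p-morphisms; $\mathsf{HA}^\partial$: (total) p-morphisms. For a homomorphism $f\colon\boldsymbol{A}\to\boldsymbol{B}$, $f_\ast\colon\boldsymbol{B}_\ast\rightharpoonup\boldsymbol{A}_\ast$ has domain $\{F\in\boldsymbol{B}_\ast: f^{-1}[F]\in\boldsymbol{A}_\ast\}$ and $f_\ast(F)=f^{-1}[F]$. For a poset $\mathbb{X}$, $\mathsf{Up}_{\mathsf{K}}(\mathbb{X})$ is the reduct to the language of $\mathsf{K}$ of the Heyting algebra $\langle\mathsf{Up}(\mathbb{X});\cap,\cup,\to,\emptyset,X\rangle$ of upsets, where $U\to V = X\smallsetminus{\downarrow}(U\smallsetminus V)$. For $p\colon\mathbb{X}\rightharpoonup\mathbb{Y}$,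 $\mathsf{Up}_{\mathsf{K}}(p)(U) = X\smallsetminus{\downarrow}p^{-1}[Y\smallsetminus U]$. *)

From Stdlib Require Import ProofIrrelevance FunctionalExtensionality PropExtensionality.

Set Implicit Arguments.

Inductive kind := PSL | ISL | bISL | PDL | IL | HA.

(** For a variety K, only the operations of the language of K are relevant:
    axioms ([in_K]) and homomorphisms ([hom]) only mention those, so the other
    operations are inert (every K-algebra extends to such a record with
    arbitrary dummy values). *)
Record alg := Alg {
  car :> Type;
  meet : car -> car -> car;
  join : car -> car -> car;
  imp  : car -> car -> car;
  neg  : car -> car;
  bot  : car;
  top  : car }.

Section AlgDefs.
Variable A : alg.

Definition ale (a b : A) : Prop := meet A a b = a.

Definition semilattice : Prop :=
  (forall a b c : A, meet A a (meet A b c) = meet A (meet A a b) c) /\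
  (forall a b : A, meet A a b = meet A b a) /\
  (forall a : A, meet A a a = a).

Definition lattice : Prop :=
  semilattice /\
  (forall a b c : A, join A a (join A b c) = join A (join A a b) c) /\
  (forall a b : A, join A a b = join A b a) /\
  (forall a : A, join A a a = a) /\
  (forall a b : A, meet A a (join A a b) = a) /\
  (forall a b : A, join A a (meet A a b) = a).

Definition distributive : Prop :=
  forall a b c : A, meet A a (join A b c) = join A (meet A a b) (meet A a c).

Definition bot_min : Prop := forall a : A, ale (bot A) a.
Definition top_max : Prop := forall a : A, ale a (top A).

Definition is_PSL : Prop :=
  semilattice /\ bot_min /\ top_max /\
  (forall a c : A, meet A c a = bot A <-> ale c (neg A a)).

Definition is_ISL : Prop :=
  semilattice /\ top_max /\
  (forall a b c : A, ale (meet A c a) b <-> ale c (imp A a b)).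

Definition is_bISL : Prop := is_ISL /\ bot_min.
Definition is_PDL : Prop := lattice /\ distributive /\ is_PSL.
Definition is_IL : Prop := lattice /\ is_ISL.
Definition is_HA : Prop := lattice /\ is_bISL.

Definition filter (F : A -> Prop) : Prop :=
  (exists a, F a) /\
  (forall a b, F a -> ale a b -> F b) /\
  (forall a b, F a -> F b -> F (meet A a b)).

Definition mi_filter (F : A -> Prop) : Prop :=
  filter F /\ (exists a, ~ F a) /\
  ~ (exists G H : A -> Prop, filter G /\ filter H /\
       ~ (forall a, G a <-> F a) /\ ~ (forall a, H a <-> F a) /\
       (forall a, F a <-> (G a /\ H a))).
End AlgDefs.
Arguments ale {A} a b.
Arguments filter {A} F.
Arguments mi_filter {A} F.

Definition in_K (k : kind) (A : alg) : Prop :=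
  match k with
  | PSL => is_PSL A | ISL => is_ISL A | bISL => is_bISL A
  | PDL => is_PDL A | IL => is_IL A | HA => is_HA A
  end.

Definition hom (k : kind) (A B : alg) (f : A -> B) : Prop :=
  let pm := forall a b, f (meet A a b) = meet B (f a) (f b) in
  let pj := forall a b, f (join A a b) = join B (f a) (f b) in
  let pi := forall a b, f (imp A a b) = imp B (f a) (f b) in
  let pn := forall a, f (neg A a) = neg B (f a) in
  let p0 := f (bot A) = bot B in
  let p1 := f (top A) = top B in
  match k with
  | PSL => pm /\ pn /\ p0 /\ p1
  | ISL => pm /\ pi /\ p1
  | bISL => pm /\ pi /\ p0 /\ p1
  | PDL => pm /\ pj /\ pn /\ p0 /\ p1
  | IL => pm /\ pj /\ pi /\ p1
  | HA => pm /\ pj /\ pi /\ p0 /\ p1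
  end.

Record poset := Poset {
  pcar :> Type;
  ple : pcar -> pcar -> Prop;
  ple_refl : forall x, ple x x;
  ple_trans : forall x y z, ple x y -> ple y z -> ple x z;
  ple_anti : forall x y, ple x y -> ple y x -> x = y }.
Arguments ple {p} _ _.
Arguments ple_trans {p} _ _ _ _ _.

(** A partial map X ⇀ Y is represented by its graph, a single-valued relation. *)
Section PMaps.
Variables X Y : poset.
Variable p : X -> Y -> Prop.

Definition single_valued : Prop := forall x y y', p x y -> p x y' -> y = y'.
Definition dom (x : X) : Prop := exists y, p x y.
Definition order_pres : Prop :=
  forall x z a b, p x a -> p z b -> ple x z -> ple a b.
Definition total : Prop := forall x, dom x.
Definition almost_total : Prop := forall x z, ple x z -> dom z -> dom x.
Definition psurjective : Prop := forall y, exists x, p x y.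

Definition neg_cond : Prop :=
  (forall x, exists w, ple x w /\ forall v, ple w v -> dom v) /\
  (forall x a y, p x a -> ple a y -> exists z b, ple x z /\ p z b /\ ple y b).

Definition pos_cond : Prop :=
  forall x a y, p x a -> ple a y -> exists z, ple x z /\ p z y.
End PMaps.
Arguments single_valued {X Y} p.
Arguments dom {X Y} p x.
Arguments order_pres {X Y} p.
Arguments total {X Y} p.
Arguments almost_total {X Y} p.
Arguments psurjective {X Y} p.
Arguments neg_cond {X Y} p.
Arguments pos_cond {X Y} p.

Definition in_Kd (k : kind) {X Y : poset} (p : X -> Y -> Prop) : Prop :=
  single_valued p /\ order_pres p /\
  match k with
  | PSL => neg_cond p
  | ISL => pos_cond p
  | bISL => neg_cond p /\ pos_cond p
  | PDL => total p /\ neg_cond p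
  | IL => almost_total p /\ pos_cond p
  | HA => total p /\ neg_cond p /\ pos_cond p
  end.

Definition mifs (A : alg) := { F : A -> Prop | mi_filter F }.
Definition mifs_le {A : alg} (F G : mifs A) : Prop :=
  forall a, proj1_sig F a -> proj1_sig G a.

Lemma mifs_le_refl (A : alg) (F : mifs A) : mifs_le F F.
Proof. intros a h; exact h. Qed.

Lemma mifs_le_trans (A : alg) (F G H : mifs A) :
  mifs_le F G -> mifs_le G H -> mifs_le F H.
Proof. intros h1 h2 a h; apply h2, h1, h. Qed.

Lemma mifs_le_anti (A : alg) (F G : mifs A) :
  mifs_le F G -> mifs_le G F -> F = G.
Proof.
  destruct F as [F hF], G as [G hG]; unfold mifs_le; simpl; intros h1 h2.
  assert (e : F = G).
  { apply functional_extensionality; intro a;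
    apply propositional_extensionality; split; auto. }
  subst G. f_equal. apply proof_irrelevance.
Qed.

Definition dual_star (A : alg) : poset :=
  @Poset (mifs A) (@mifs_le A) (@mifs_le_refl A) (@mifs_le_trans A) (@mifs_le_anti A).

(** f_* : B_* ⇀ A_*, F ↦ f^{-1}[F] (defined iff f^{-1}[F] is meet irreducible). *)
Definition fstar {A B : alg} (f : A -> B) :
  dual_star B -> dual_star A -> Prop :=
  fun F G => forall a, proj1_sig G a <-> proj1_sig F (f a).

Definition upset {X : poset} (U : X -> Prop) : Prop :=
  forall x y, ple x y -> U x -> U y.
Definition ups (X : poset) := { U : X -> Prop | upset U }.

Section Ups.
Variable X : poset.

Lemma up_meet_ok (U V : ups X) : upset (fun x => proj1_sig U x /\ proj1_sig V x).
Proof.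
  destruct U as [U hU], V as [V hV]; intros x y hxy [h1 h2]; simpl; eauto.
Qed.
Lemma up_join_ok (U V : ups X) : upset (fun x => proj1_sig U x \/ proj1_sig V x).
Proof.
  destruct U as [U hU], V as [V hV]; intros x y hxy [h|h]; simpl; eauto.
Qed.
Lemma up_compl_down_ok (S : X -> Prop) :
  upset (fun x => ~ exists x', ple x x' /\ S x').
Proof.
  intros x y hxy h [x' [h1 h2]]. apply h. exists x'. split; auto.
  eapply ple_trans; eauto.
Qed.
Lemma up_top_ok : upset (fun _ : X => True). Proof. intros ? ? ? h; exact h. Qed.
Lemma up_bot_ok : upset (fun _ : X => False). Proof. intros ? ? ? h; exact h. Qed.

Definition up_meet (U V : ups X) : ups X := exist _ _ (up_meet_ok U V).
Definition up_join (U V : ups X) : ups X := exist _ _ (up_join_ok U V).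
(** U → V = X \ ↓(U \ V) *)
Definition up_imp (U V : ups X) : ups X :=
  exist _ _ (up_compl_down_ok (fun x => proj1_sig U x /\ ~ proj1_sig V x)).
Definition up_bot : ups X := exist _ _ up_bot_ok.
Definition up_top : ups X := exist _ _ up_top_ok.
Definition up_neg (U : ups X) : ups X := up_imp U up_bot.
End Ups.

(** Up(X) as an algebra of the full signature; Up_K(X) is its K-reduct,
    which is what [hom k] and [in_K k] look at. *)
Definition Up (X : poset) : alg :=
  @Alg (ups X) (@up_meet X) (@up_join X) (@up_imp X) (@up_neg X) (up_bot X) (up_top X).

(** Up_K(p)(U) = X \ ↓ p^{-1}[Y \ U] *)
Definition Up_map {X Y : poset} (p : X -> Y -> Prop) (U : Up Y) : Up X :=
  exist _ _ (@up_compl_down_ok X (fun x => exists y, p x y /\ ~ proj1_sig U y)).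

From Stdlib Require Import Classical ProofIrrelevance FunctionalExtensionality PropExtensionality.
From mathcomp Require classical_sets boolp.
Set Implicit Arguments.

(* Part (i) rests on Zorn's lemma: a filter of B maximal among those containing a
   filter K and missing f[A \ H] is meet irreducible, and its preimage is H as soon as
   that of K is.  Taking for K the upset of f[H] gives surjectivity of f_* for injective
   f, and taking the filter generated by F and f[H] gives the positive p-morphism
   condition.  For the negative condition one uses ultrafilters instead: they are meet
   irreducible, no other meet irreducible filter lies above them, and they pull back to
   ultrafilters along maps preserving pseudocomplements.  Totality holds because meet
   irreducible filters of distributive lattices are prime, and primality is preserved by
   preimages under lattice homomorphisms.
   In part (ii) each defining condition of K^∂ is exactly what makes Up(p) commute with
   the corresponding operation: cofinality of dom(p) for 0, almost totality for ∨, the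
   negative and positive conditions for ¬ and →; surjectivity of p makes Up(p)
   injective. *)

Lemma zorn_max_superset (T : Type) (P : (T -> Prop) -> Prop) (Z0 : T -> Prop) :
  P Z0 ->
  (forall C : (T -> Prop) -> Prop, (exists Z, C Z) -> (forall Z, C Z -> P Z) ->
     (forall Z Z', C Z -> C Z' -> (forall t, Z t -> Z' t) \/ (forall t, Z' t -> Z t)) ->
     P (fun t => exists Z, C Z /\ Z t)) ->
  exists Z, P Z /\ (forall t, Z0 t -> Z t) /\
    forall Z', P Z' -> (forall t, Z t -> Z' t) -> forall t, Z' t -> Z t.
Proof.
  intros hZ0 hchain.
  pose (S := { Z : T -> Prop | P Z /\ forall t, Z0 t -> Z t }).
  pose (incl := fun X Y : S => forall t, proj1_sig X t -> proj1_sig Y t).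
  assert (hincl : forall X Y, boolp.asbool (incl X Y) = true <-> incl X Y).
  { intros X Y; split; intro h.
    - exact (ssrbool.elimT (boolp.asboolP _) h).
    - exact (ssrbool.introT (boolp.asboolP _) h). }
  destruct (@classical_sets.Zorn S (fun X Y => boolp.asbool (incl X Y)))
    as [[Z [hZ hZ0Z]] hmax].
  - intros X; apply hincl; intros t h; exact h.
  - intros X Y W h1 h2; apply hincl in h1, h2; apply hincl; intros t h; auto.
  - intros [X hX] [Y hY] h1 h2; apply hincl in h1, h2; unfold incl in *; simpl in *.
    assert (X = Y).
    { apply functional_extensionality; intro t; apply propositional_extensionality; split; auto. }
    subst Y; f_equal; apply proof_irrelevance.
  - intros C hC.
    destruct (classic (exists X, C X)) as [[X0 hX0] | hempty].
    + pose (C' := fun Z => exists X, C X /\ proj1_sig X = Z).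
      assert (hU : P (fun t => exists Z, C' Z /\ Z t)).
      { apply hchain.
        - exists (proj1_sig X0), X0; auto.
        - intros Z [X [_ <-]]; exact (proj1 (proj2_sig X)).
        - intros Z Z' [X [hX <-]] [X' [hX' <-]].
          destruct (hC X X' hX hX') as [h | h]; apply hincl in h; auto. }
      assert (hZ0U : forall t, Z0 t -> exists Z, C' Z /\ Z t).
      { intros t ht; exists (proj1_sig X0); split; [exists X0; auto | apply (proj2_sig X0), ht]. }
      exists (exist _ (fun t => exists Z, C' Z /\ Z t) (conj hU hZ0U) : S).
      intros X hX; apply hincl; intros t h.
      exists (proj1_sig X); split; [exists X |]; auto.
    + exists (exist _ Z0 (conj hZ0 (fun t h => h))); intros X hX; exfalso; eauto.
  - exists Z; split; [exact hZ | split; [exact hZ0Z |]].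
    intros Z' hZ' hZZ'.
    assert (hZ0Z' : forall t, Z0 t -> Z' t) by auto.
    assert (e : (exist _ Z' (conj hZ' hZ0Z') : S) = exist _ Z (conj hZ hZ0Z))
      by (apply hmax, hincl; exact hZZ').
    injection e as ->; auto.
Qed.

Section Semilattice.
Variable A : alg.
Hypothesis hS : semilattice A.

Lemma ale_refl (a : A) : ale a a.
Proof. apply hS. Qed.

Lemma ale_trans (a b c : A) : ale a b -> ale b c -> ale a c.
Proof.
  destruct hS as [hA _]; unfold ale; intros h1 h2.
  rewrite <- h1, <- hA, h2; reflexivity.
Qed.

Lemma ale_anti (a b : A) : ale a b -> ale b a -> a = b.
Proof.
  destruct hS as [_ [hC _]]; unfold ale; intros h1 h2.
  rewrite <- h1, hC; exact h2.
Qed.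

Lemma meet_lb_l (a b : A) : ale (meet A a b) a.
Proof.
  destruct hS as [hA [hC hI]]; unfold ale.
  rewrite (hC (meet A a b) a), hA, hI; reflexivity.
Qed.

Lemma meet_lb_r (a b : A) : ale (meet A a b) b.
Proof.
  destruct hS as [hA [_ hI]]; unfold ale.
  rewrite <- hA, hI; reflexivity.
Qed.

Lemma meet_glb (a b c : A) : ale c a -> ale c b -> ale c (meet A a b).
Proof.
  destruct hS as [hA _]; unfold ale; intros h1 h2.
  rewrite hA, h1; exact h2.
Qed.

Lemma ale_meet_l (a b c : A) : ale a c -> ale (meet A a b) c.
Proof. apply ale_trans, meet_lb_l. Qed.

Lemma ale_meet_r (a b c : A) : ale b c -> ale (meet A a b) c.
Proof. apply ale_trans, meet_lb_r. Qed.

End Semilattice.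

Ltac meet_le hS :=
  solve [ repeat first
    [ apply (meet_glb hS) | apply (ale_refl hS) | assumption
    | apply (ale_meet_l hS); meet_le hS | apply (ale_meet_r hS); meet_le hS ] ].

Lemma hom_mono {A B : alg} {f : A -> B}
  (hm : forall a b, f (meet A a b) = meet B (f a) (f b)) (a b : A) :
  ale a b -> ale (f a) (f b).
Proof. unfold ale; intro h; rewrite <- hm, h; reflexivity. Qed.

Section Filters.
Variable A : alg.
Hypothesis hS : semilattice A.

Lemma filter_up (F : A -> Prop) (a b : A) : filter F -> F a -> ale a b -> F b.
Proof. intros [_ [h _]]; eauto. Qed.

Lemma filter_meet (F : A -> Prop) {a b : A} : filter F -> F a -> F b -> F (meet A a b).
Proof. intros [_ [_ h]]; eauto. Qed.

Lemma chain_union_filter (C : (A -> Prop) -> Prop) :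
  (exists F, C F) -> (forall F, C F -> filter F) ->
  (forall F G, C F -> C G -> (forall a, F a -> G a) \/ (forall a, G a -> F a)) ->
  filter (fun a => exists F, C F /\ F a).
Proof.
  intros [F0 hF0] hC htot; split; [|split].
  - destruct (proj1 (hC F0 hF0)) as [a ha]; exists a, F0; auto.
  - intros a b [F [hF ha]] hab; exists F; split; [|eapply filter_up]; eauto.
  - intros a b [F [hF ha]] [G [hG hb]].
    destruct (htot F G hF hG) as [h | h].
    + exists G; split; [|apply filter_meet]; auto.
    + exists F; split; [|apply filter_meet]; auto.
Qed.

Definition adjoin (F : A -> Prop) (a : A) : A -> Prop :=
  fun x => exists u, F u /\ ale (meet A u a) x.

Lemma adjoin_filter (F : A -> Prop) (a : A) : filter F -> filter (adjoin F a).
Proof.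
  intros hF; split; [|split].
  - destruct (proj1 hF) as [u hu]; exists (meet A u a), u; split; [|apply ale_refl]; auto.
  - intros x y [u [hu h1]] h2; exists u; split; [|eapply ale_trans]; eauto.
  - intros x y [u [hu h1]] [v [hv h2]]; exists (meet A u v).
    split; [apply filter_meet; auto|].
    apply (meet_glb hS);
      [apply (ale_trans hS) with (2 := h1) | apply (ale_trans hS) with (2 := h2)]; meet_le hS.
Qed.

Lemma adjoin_incl (F : A -> Prop) (a x : A) : F x -> adjoin F a x.
Proof. intro h; exists x; split; [exact h | meet_le hS]. Qed.

Lemma adjoin_self (F : A -> Prop) (a : A) : filter F -> adjoin F a a.
Proof. intros [[u hu] _]; exists u; split; [exact hu | meet_le hS]. Qed.

Definition mi_separated (F : A -> Prop) : Prop :=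
  forall a b, ~ F a -> ~ F b ->
  exists c u, ~ F c /\ F u /\ ale (meet A u a) c /\ ale (meet A u b) c.

Lemma mi_filter_separated (F : A -> Prop) : mi_filter F -> mi_separated F.
Proof.
  intros [hF [_ hmi]] a b ha hb; apply NNPP; intro hno; apply hmi.
  exists (adjoin F a), (adjoin F b).
  split; [apply adjoin_filter; auto|]. split; [apply adjoin_filter; auto|].
  split; [intro e; apply ha, e, adjoin_self; auto|].
  split; [intro e; apply hb, e, adjoin_self; auto|].
  intro x; split.
  - intro hx; split; apply adjoin_incl; auto.
  - intros [[u1 [hu1 h1]] [u2 [hu2 h2]]]; apply NNPP; intro hx; apply hno.
    exists x, (meet A u1 u2); split; [exact hx | split; [apply filter_meet; auto|]].
    split; [apply (ale_trans hS) with (2 := h1) | apply (ale_trans hS) with (2 := h2)];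
      meet_le hS.
Qed.

Lemma mi_filter_intro (F : A -> Prop) :
  filter F -> (exists a, ~ F a) ->
  (forall G H a b, filter G -> filter H -> (forall x, F x <-> G x /\ H x) ->
     G a -> ~ F a -> H b -> ~ F b -> False) ->
  mi_filter F.
Proof.
  intros hF hp hw; split; [exact hF | split; [exact hp |]].
  intros [G [H [hG [hH [nG [nH e]]]]]].
  assert (strict : forall G', (forall x, F x -> G' x) -> ~ (forall x, G' x <-> F x) ->
                   exists a, G' a /\ ~ F a).
  { intros G' hsub hne; apply NNPP; intro n; apply hne; intro x; split; [|auto].
    intro g; apply NNPP; intro nf; eauto. }
  destruct (strict G) as [a [ga fa]]; [intros x hx; apply e in hx; tauto | exact nG |].
  destruct (strict H) as [b [hb fb]]; [intros x hx; apply e in hx; tauto | exact nH |].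
  exact (hw G H a b hG hH e ga fa hb fb).
Qed.

Lemma mi_filter_of_separated (F : A -> Prop) :
  filter F -> (exists a, ~ F a) -> mi_separated F -> mi_filter F.
Proof.
  intros hF hp hsep; apply mi_filter_intro; auto.
  intros G H a b hG hH e ga fa hb fb.
  destruct (hsep a b fa fb) as [c [u [nc [fu [h1 h2]]]]].
  apply nc, e; apply e in fu as [gu hu].
  split; [apply (filter_up (a := meet A u a)) | apply (filter_up (a := meet A u b))];
    auto; apply filter_meet; auto.
Qed.

Lemma maximal_filter_avoiding (K S : A -> Prop) :
  filter K -> (forall a, K a -> ~ S a) ->
  exists Z, filter Z /\ (forall a, K a -> Z a) /\ (forall a, Z a -> ~ S a) /\
    forall y, ~ Z y -> exists s, S s /\ adjoin Z y s.
Proof.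
  intros hK hKS.
  destruct (@zorn_max_superset A (fun Z => filter Z /\ forall a, Z a -> ~ S a) K)
    as [Z [[hZ hZS] [hKZ hmax]]].
  - split; auto.
  - intros C hne hC htot; split.
    + apply chain_union_filter; auto; intros F hF; apply hC, hF.
    + intros a [F [hF ha]]; exact (proj2 (hC F hF) a ha).
  - exists Z; split; [exact hZ | split; [exact hKZ | split; [exact hZS |]]].
    intros y hy; apply NNPP; intro n; apply hy, (hmax (adjoin Z y)).
    + split; [apply adjoin_filter; auto | intros b hb hs; apply n; eauto].
    + intros; apply adjoin_incl; auto.
    + apply adjoin_self; auto.
Qed.

End Filters.

Definition pseudocomplement {A : alg} (n : A -> A) : Prop :=
  forall a c : A, meet A c a = bot A <-> ale c (n a).

Definition relative_pseudocomplement (A : alg) : Prop :=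
  forall a b c : A, ale (meet A c a) b <-> ale c (imp A a b).

Lemma imp_bot_pseudocomplement (A : alg) :
  semilattice A -> bot_min A -> relative_pseudocomplement A ->
  pseudocomplement (fun a : A => imp A a (bot A)).
Proof.
  intros hS hb hi a c; split; intro h.
  - apply hi; rewrite h; apply (ale_refl hS).
  - apply (ale_anti hS); [apply hi, h | apply hb].
Qed.

Section Ultrafilters.
Variable A : alg.
Hypotheses (hS : semilattice A) (hb : bot_min A).
Variable n : A -> A.
Hypothesis hn : pseudocomplement n.

Lemma mi_filter_nbot (F : A -> Prop) : mi_filter F -> ~ F (bot A).
Proof. intros [hF [[a na] _]] h; apply na; eapply filter_up; eauto; apply hb. Qed.

Definition ultra (U : A -> Prop) : Prop :=
  filter U /\ ~ U (bot A) /\ forall a, U a \/ U (n a).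

Lemma meet_pc_bot (a : A) : meet A (n a) a = bot A.
Proof. apply hn, (ale_refl hS). Qed.

Lemma ultra_maximal (U V : A -> Prop) :
  ultra U -> filter V -> ~ V (bot A) -> (forall a, U a -> V a) -> forall a, V a -> U a.
Proof.
  intros [hU [_ hUn]] hV hVb hUV a ha; destruct (hUn a) as [h | h]; [exact h |].
  exfalso; apply hVb; rewrite <- (meet_pc_bot a); apply filter_meet; auto.
Qed.

Lemma ultra_above (U V : A -> Prop) :
  ultra U -> mi_filter V -> (forall a, U a -> V a) -> ultra V.
Proof.
  intros hU hV hUV.
  assert (hVU := ultra_maximal hU (proj1 hV) (mi_filter_nbot hV) hUV).
  split; [exact (proj1 hV) | split; [exact (mi_filter_nbot hV) |]].
  intro a; destruct (proj2 (proj2 hU) a); auto.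
Qed.

Lemma ultra_mi_filter (U : A -> Prop) : ultra U -> mi_filter U.
Proof.
  intros hU; apply mi_filter_intro; [apply hU | exists (bot A); apply hU |].
  intros G H a b hG hH e ga fa hb' fb.
  assert (hsub : forall G', filter G' -> (forall x, U x -> G' x) -> forall x, G' x -> ~ U x ->
                 G' (bot A)).
  { intros G' hG' hUG' x gx ux; apply NNPP; intro nb.
    exact (ux (ultra_maximal hU hG' nb hUG' x gx)). }
  apply (proj1 (proj2 hU)), e; split.
  - apply (hsub G hG) with a; auto; intros x hx; apply e in hx; tauto.
  - apply (hsub H hH) with b; auto; intros x hx; apply e in hx; tauto.
Qed.

Lemma ultra_extend (K : A -> Prop) :
  filter K -> ~ K (bot A) -> exists U, ultra U /\ forall a, K a -> U a.
Proof.
  intros hK hKb.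
  destruct (@maximal_filter_avoiding A hS K (fun a => a = bot A) hK)
    as [Z [hZ [hKZ [hZS hmax]]]].
  { intros a ha ->; exact (hKb ha). }
  exists Z; split; [| exact hKZ].
  split; [exact hZ | split; [intro z; exact (hZS _ z eq_refl) |]].
  intro a; destruct (classic (Z a)) as [h | h]; [left; exact h | right].
  destruct (hmax a h) as [s [-> [u [hu l]]]].
  apply (filter_up hZ hu), hn, (ale_anti hS); [exact l | apply hb].
Qed.

End Ultrafilters.
Arguments ultra {A} n U.

Section Lattices.
Variable A : alg.
Hypothesis hL : lattice A.

Lemma join_ub_l (a b : A) : ale a (join A a b).
Proof. apply hL. Qed.

Lemma join_ub_r (a b : A) : ale b (join A a b).
Proof.
  destruct hL as [_ [_ [hC [_ [h _]]]]]; unfold ale; rewrite hC; apply h.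
Qed.

Lemma join_lub (a b d : A) : ale a d -> ale b d -> ale (join A a b) d.
Proof.
  destruct hL as [[_ [mC _]] [jA [jC [_ [ab1 ab2]]]]].
  assert (hjoin : forall x y : A, ale x y -> join A x y = y).
  { intros x y h; unfold ale in h; rewrite <- h at 1; rewrite jC, mC; apply ab2. }
  intros h1 h2; apply hjoin in h1, h2; unfold ale.
  assert (e : join A (join A a b) d = d) by (rewrite <- jA, h2, h1; reflexivity).
  rewrite <- e at 1; apply ab1.
Qed.

Definition meet_distributive : Prop :=
  forall u a b : A, ale (meet A u (join A a b)) (join A (meet A u a) (meet A u b)).

Lemma distributive_meet_distributive : distributive A -> meet_distributive.
Proof. intros hD u a b; rewrite hD; apply (ale_refl (proj1 hL)). Qed.

Lemma relative_pseudocomplement_meet_distributive :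
  relative_pseudocomplement A -> meet_distributive.
Proof.
  intros hi u a b; pose proof (proj1 hL) as hS.
  apply (ale_trans hS) with (meet A (join A a b) u); [meet_le hS |].
  apply hi, join_lub; apply hi;
    [ apply (ale_trans hS) with (2 := join_ub_l _ _)
    | apply (ale_trans hS) with (2 := join_ub_r _ _) ]; meet_le hS.
Qed.

Definition prime (F : A -> Prop) : Prop :=
  forall a b, F (join A a b) -> F a \/ F b.

Lemma mi_filter_prime (F : A -> Prop) :
  meet_distributive -> mi_filter F -> prime F.
Proof.
  intros hd hF a b hab; apply NNPP; intro n.
  destruct (mi_filter_separated (proj1 hL) hF a b) as [c [u [nc [hu [l1 l2]]]]];
    [tauto | tauto |].
  apply nc, (filter_up (a := meet A u (join A a b)) (proj1 hF)).
  - apply filter_meet; [apply hF | exact hu | exact hab].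
  - eapply (ale_trans (proj1 hL)); [apply hd | apply join_lub; auto].
Qed.

Lemma prime_mi_filter (F : A -> Prop) :
  filter F -> (exists a, ~ F a) -> prime F -> mi_filter F.
Proof.
  intros hF hp hpr; apply mi_filter_intro; auto.
  intros G H a b hG hH e ga fa hb fb.
  assert (hab : F (join A a b)).
  { apply e; split; eapply filter_up; eauto; [apply join_ub_l | apply join_ub_r]. }
  destruct (hpr a b hab); auto.
Qed.

End Lattices.

Lemma fstar_single_valued (A B : alg) (f : A -> B) : single_valued (fstar f).
Proof.
  intros F G G' h1 h2; apply mifs_le_anti; intros a ha; simpl in *.
  - apply h2, h1, ha.
  - apply h1, h2, ha.
Qed.

Lemma fstar_order_pres (A B : alg) (f : A -> B) : order_pres (fstar f).
Proof. intros F F' G G' h1 h2 l a ha; simpl in *; apply h2, l, h1, ha. Qed.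

Section Preimage.
Context {A B : alg} {f : A -> B}.
Hypotheses (hSA : semilattice A) (hSB : semilattice B).
Hypothesis hm : forall a b, f (meet A a b) = meet B (f a) (f b).

Lemma fstar_preimage (F : dual_star B) (hF : mi_filter (fun a => proj1_sig F (f a))) :
  fstar f F (exist _ _ hF).
Proof. intro a; simpl; tauto. Qed.

(* A filter of [B] maximal among those containing [K] and missing the image of
   the complement of [H] is meet irreducible. *)
Lemma mi_filter_extension (H : A -> Prop) (K : B -> Prop) :
  mi_filter H -> filter K -> (forall a, K (f a) <-> H a) ->
  exists Z, mi_filter Z /\ (forall b, K b -> Z b) /\ (forall a, Z (f a) <-> H a).
Proof.
  intros hH hK hKH.
  destruct (@maximal_filter_avoiding B hSB K (fun b => exists a, ~ H a /\ b = f a) hK)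
    as [Z [hZ [hKZ [hZS hmax]]]].
  { intros b hb [a [ha ->]]; apply ha, hKH, hb. }
  assert (hZH : forall a, Z (f a) <-> H a).
  { intro a; split; intro h.
    - apply NNPP; intro n; exact (hZS _ h (ex_intro _ a (conj n eq_refl))).
    - apply hKZ, hKH, h. }
  exists Z; split; [| split; [exact hKZ | exact hZH]].
  apply mi_filter_of_separated; [exact hZ | |].
  - destruct hH as [_ [[a ha] _]]; exists (f a); intro z; apply ha, hZH, z.
  - intros y1 y2 n1 n2.
    destruct (hmax y1 n1) as [s1 [[a1 [na1 ->]] [z1 [hz1 l1]]]].
    destruct (hmax y2 n2) as [s2 [[a2 [na2 ->]] [z2 [hz2 l2]]]].
    destruct (mi_filter_separated hSA hH a1 a2 na1 na2) as [c [h [nc [hh [m1 m2]]]]].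
    exists (f c), (meet B z1 (meet B z2 (f h))); split; [| split; [| split]].
    + intro zc; apply nc, hZH, zc.
    + apply (filter_meet hZ hz1), (filter_meet hZ hz2), hZH, hh.
    + apply (ale_trans hSB) with (meet B (f h) (f a1)).
      * apply (meet_glb hSB); [meet_le hSB | apply (ale_trans hSB) with (2 := l1); meet_le hSB].
      * rewrite <- hm; apply (hom_mono hm), m1.
    + apply (ale_trans hSB) with (meet B (f h) (f a2)).
      * apply (meet_glb hSB); [meet_le hSB | apply (ale_trans hSB) with (2 := l2); meet_le hSB].
      * rewrite <- hm; apply (hom_mono hm), m2.
Qed.

Definition image_up (H : A -> Prop) : B -> Prop :=
  fun b => exists h, H h /\ ale (f h) b.

Lemma image_up_filter (H : A -> Prop) : filter H -> filter (image_up H).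
Proof.
  intros hH; split; [| split].
  - destruct (proj1 hH) as [h hh]; exists (f h), h; split; [exact hh | apply (ale_refl hSB)].
  - intros x y [h [hh l]] l'; exists h; split; [exact hh | apply (ale_trans hSB) with x; auto].
  - intros x y [h [hh l]] [h' [hh' l']]; exists (meet A h h').
    split; [apply filter_meet; auto |].
    rewrite hm; apply (meet_glb hSB); [apply (ale_meet_l hSB), l | apply (ale_meet_r hSB), l'].
Qed.

Lemma fstar_psurjective :
  (forall a a' : A, f a = f a' -> a = a') -> psurjective (fstar f).
Proof.
  intros hinj [H hH].
  destruct (@mi_filter_extension H (image_up H) hH) as [Z [hZ [_ hZH]]].
  - apply image_up_filter, hH.
  - intro a; split.
    + intros [h [hh l]]; unfold ale in l; rewrite <- hm in l; apply hinj in l.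
      apply (filter_up (proj1 hH) hh); rewrite <- l; apply (meet_lb_r hSA).
    + intro ha; exists a; split; [exact ha | apply (ale_refl hSB)].
  - exists (exist _ Z hZ); intro a; simpl; split; apply hZH.
Qed.

Definition join_image (F : B -> Prop) (H : A -> Prop) : B -> Prop :=
  fun y => exists u h, F u /\ H h /\ ale (meet B u (f h)) y.

Lemma join_image_filter (F : B -> Prop) (H : A -> Prop) :
  filter F -> filter H -> filter (join_image F H).
Proof.
  intros hF hH; split; [| split].
  - destruct (proj1 hF) as [u hu], (proj1 hH) as [h hh].
    exists (meet B u (f h)), u, h; repeat split; auto; apply (ale_refl hSB).
  - intros x y [u [h [hu [hh l]]]] l'; exists u, h; repeat split; auto.
    apply (ale_trans hSB) with x; auto.
  - intros x y [u [h [hu [hh l]]]] [u' [h' [hu' [hh' l']]]].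
    exists (meet B u u'), (meet A h h'); split; [apply filter_meet; auto |].
    split; [apply filter_meet; auto |]; rewrite hm; apply (meet_glb hSB).
    + apply (ale_trans hSB) with (2 := l); meet_le hSB.
    + apply (ale_trans hSB) with (2 := l'); meet_le hSB.
Qed.

Lemma join_image_l (F : B -> Prop) (H : A -> Prop) (u : B) :
  filter H -> F u -> join_image F H u.
Proof. intros [[h hh] _] hu; exists u, h; repeat split; auto; meet_le hSB. Qed.

Lemma join_image_r (F : B -> Prop) (H : A -> Prop) (h : A) :
  filter F -> H h -> join_image F H (f h).
Proof. intros [[u hu] _] hh; exists u, h; repeat split; auto; meet_le hSB. Qed.

Hypotheses (htB : top_max B) (h1 : f (top A) = top B).

Lemma filter_preimage (F : B -> Prop) : filter F -> filter (fun a => F (f a)).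
Proof.
  intros hF; split; [| split].
  - exists (top A); rewrite h1; destruct (proj1 hF) as [u hu]; exact (filter_up hF hu (htB u)).
  - intros a b ha l; exact (filter_up hF ha (hom_mono hm l)).
  - intros a b ha hb; rewrite hm; apply filter_meet; auto.
Qed.

Section Pseudocomplement.
Hypotheses (hbA : bot_min A) (hbB : bot_min B) (h0 : f (bot A) = bot B).
Variables (nA : A -> A) (nB : B -> B).
Hypotheses (hnA : pseudocomplement nA) (hnB : pseudocomplement nB).
Hypothesis hnf : forall a, f (nA a) = nB (f a).

Lemma ultra_preimage (U : B -> Prop) : ultra nB U -> ultra nA (fun a => U (f a)).
Proof.
  intros [hU [hUb hUn]]; split; [apply filter_preimage, hU | split].
  - rewrite h0; exact hUb.
  - intro a; rewrite hnf; apply hUn.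
Qed.

Lemma fstar_neg_cond : neg_cond (fstar f).
Proof.
  assert (hdom : forall U (hU : ultra nB U),
             dom (fstar f) (exist _ U (ultra_mi_filter hSB hnB hU))).
  { intros U hU; exists (exist _ _ (ultra_mi_filter hSA hnA (ultra_preimage hU))).
    apply fstar_preimage. }
  split.
  - intros [F hF].
    destruct (ultra_extend hSB hbB hnB (proj1 hF) (mi_filter_nbot hbB hF)) as [U [hU hFU]].
    exists (exist _ U (ultra_mi_filter hSB hnB hU)); split; [exact hFU |].
    intros [V hV] hUV; apply (hdom V (ultra_above hSB hbB hnB hU hV hUV)).
  - intros [F hF] [G hG] [H hH] e l; unfold fstar, mifs_le in *; simpl in *.
    destruct (@ultra_extend B hSB hbB nB hnB (join_image F H)) as [U [hU hKU]].
    + apply join_image_filter; [apply hF | apply hH].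
    + intros [u [h [hu [hh lb]]]].
      (* u <= nB (f h) = f (nA h), so both nA h and h lie in H *)
      assert (hnh : H (nA h)).
      { apply l, e, (filter_up (proj1 hF) hu); rewrite hnf; apply hnB, (ale_anti hSB lb), hbB. }
      apply (mi_filter_nbot hbA hH); rewrite <- (meet_pc_bot hSA hnA h).
      apply filter_meet; [apply hH | exact hnh | exact hh].
    + destruct (hdom U hU) as [G' hG'].
      exists (exist _ U (ultra_mi_filter hSB hnB hU)), G'; split; [| split].
      * intros u hu; apply hKU, join_image_l; [apply hH | exact hu].
      * exact hG'.
      * intros h hh; apply hG', hKU, join_image_r; [apply hF | exact hh].
Qed.

End Pseudocomplement.

Section RelativePseudocomplement.
Hypotheses (hiA : relative_pseudocomplement A) (hiB : relative_pseudocomplement B).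
Hypothesis hif : forall a b, f (imp A a b) = imp B (f a) (f b).

Lemma fstar_pos_cond : pos_cond (fstar f).
Proof.
  intros [F hF] [G hG] [H hH] e l; unfold fstar, mifs_le in *; simpl in *.
  destruct (@mi_filter_extension H (join_image F H) hH) as [Z [hZ [hKZ hZH]]].
  - apply join_image_filter; [apply hF | apply hH].
  - intro t; split.
    + intros [u [h [hu [hh lb]]]].
      (* u <= f h -> f t = f (h -> t), so h -> t lies in H *)
      assert (himp : H (imp A h t)).
      { apply l, e, (filter_up (proj1 hF) hu); rewrite hif; apply hiB, lb. }
      apply (filter_up (proj1 hH) (filter_meet (proj1 hH) himp hh)), hiA, (ale_refl hSA).
    + intro ht; apply join_image_r; [apply hF | exact ht].
  - exists (exist _ Z hZ); split.
    + intros u hu; apply hKZ, join_image_l; [apply hH | exact hu].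
    + intro a; simpl; split; apply hZH.
Qed.

End RelativePseudocomplement.

Section DistributiveLattices.
Hypotheses (hLA : lattice A) (hLB : lattice B) (hdB : meet_distributive B).
Hypothesis hj : forall a b, f (join A a b) = join B (f a) (f b).

Lemma mi_filter_preimage (F : B -> Prop) :
  mi_filter F -> (exists a, ~ F (f a)) -> mi_filter (fun a => F (f a)).
Proof.
  intros hF hp; apply (prime_mi_filter hLA); [apply filter_preimage, hF | exact hp |].
  intros a b h; rewrite hj in h; exact (mi_filter_prime hLB hdB hF _ _ h).
Qed.

Lemma fstar_almost_total : almost_total (fstar f).
Proof.
  intros F F' l [G e].
  assert (hp : exists a, ~ proj1_sig F (f a)).
  { destruct (proj2_sig G) as [_ [[a na] _]]; exists a; intro h; apply na, e, l, h. }
  exists (exist _ _ (mi_filter_preimage (proj2_sig F) hp)); apply fstar_preimage.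
Qed.

Lemma fstar_total (hbB : bot_min B) (h0 : f (bot A) = bot B) : total (fstar f).
Proof.
  intros F.
  assert (hp : exists a, ~ proj1_sig F (f a)).
  { exists (bot A); rewrite h0; exact (mi_filter_nbot hbB (proj2_sig F)). }
  exists (exist _ _ (mi_filter_preimage (proj2_sig F) hp)); apply fstar_preimage.
Qed.

End DistributiveLattices.

End Preimage.

Lemma fstar_in_Kd {k : kind} {A B : alg} {f : A -> B} :
  in_K k A -> in_K k B -> hom k A B f -> in_Kd k (fstar f).
Proof.
  intros hA hB hf.
  split; [apply fstar_single_valued | split; [apply fstar_order_pres |]].
  destruct k; simpl in hA, hB, hf.
  - destruct hA as [sA [bA [_ nA]]], hB as [sB [bB [tB nB]]], hf as [hm [hn [h0 h1]]].
    exact (fstar_neg_cond sA sB hm tB h1 bA bB h0 nA nB hn).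
  - destruct hA as [sA [_ iA]], hB as [sB [_ iB]], hf as [hm [hi _]].
    exact (fstar_pos_cond sA sB hm iA iB hi).
  - destruct hA as [[sA [_ iA]] bA], hB as [[sB [tB iB]] bB], hf as [hm [hi [h0 h1]]].
    split; [| exact (fstar_pos_cond sA sB hm iA iB hi)].
    apply (fstar_neg_cond sA sB hm tB h1 bA bB h0 (imp_bot_pseudocomplement sA bA iA)
             (imp_bot_pseudocomplement sB bB iB)).
    intro a; rewrite hi, h0; reflexivity.
  - destruct hA as [lA [_ [sA [bA [_ nA]]]]], hB as [lB [dB [sB [bB [tB nB]]]]],
      hf as [hm [hj [hn [h0 h1]]]].
    split; [| exact (fstar_neg_cond sA sB hm tB h1 bA bB h0 nA nB hn)].
    exact (fstar_total hm tB h1 lA lB (distributive_meet_distributive lB dB) hj bB h0).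
  - destruct hA as [lA [sA [_ iA]]], hB as [lB [sB [tB iB]]], hf as [hm [hj [hi h1]]].
    split; [| exact (fstar_pos_cond sA sB hm iA iB hi)].
    exact (fstar_almost_total hm tB h1 lA lB
             (relative_pseudocomplement_meet_distributive lB iB) hj).
  - destruct hA as [lA [[sA [_ iA]] bA]], hB as [lB [[sB [tB iB]] bB]],
      hf as [hm [hj [hi [h0 h1]]]].
    split; [| split; [| exact (fstar_pos_cond sA sB hm iA iB hi)]].
    + exact (fstar_total hm tB h1 lA lB
               (relative_pseudocomplement_meet_distributive lB iB) hj bB h0).
    + apply (fstar_neg_cond sA sB hm tB h1 bA bB h0 (imp_bot_pseudocomplement sA bA iA)
               (imp_bot_pseudocomplement sB bB iB)).
      intro a; rewrite hi, h0; reflexivity.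
Qed.

Lemma up_ext (X : poset) (U V : ups X) :
  (forall x, proj1_sig U x <-> proj1_sig V x) -> U = V.
Proof.
  destruct U as [U hU], V as [V hV]; simpl; intro h.
  assert (U = V).
  { apply functional_extensionality; intro x; apply propositional_extensionality, h. }
  subst V; f_equal; apply proof_irrelevance.
Qed.

Section UpMap.
Context {X Y : poset} {p : X -> Y -> Prop}.

Lemma Up_map_meet (U V : ups Y) :
  Up_map p (up_meet U V) = up_meet (Up_map p U) (Up_map p V).
Proof.
  apply up_ext; intro x; simpl; split.
  - intro h; split; intros [x' [l [y [pxy ny]]]]; apply h; exists x'; split; auto; exists y; tauto.
  - intros [h1 h2] [x' [l [y [pxy ny]]]].
    apply not_and_or in ny as [ny | ny]; [apply h1 | apply h2]; exists x'; split; eauto.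
Qed.

Lemma Up_map_top : Up_map p (up_top Y) = up_top X.
Proof. apply up_ext; intro x; simpl; split; auto; intros _ [x' [_ [y [_ n]]]]; auto. Qed.

Lemma Up_map_bot : neg_cond p -> Up_map p (up_bot Y) = up_bot X.
Proof.
  intros [hcof _]; apply up_ext; intro x; simpl; split; [| tauto].
  intro n; apply n; destruct (hcof x) as [w [l hw]]; destruct (hw w (ple_refl _ w)) as [y py].
  exists w; split; [exact l | exists y; auto].
Qed.

Hypothesis op : order_pres p.

Lemma Up_map_join (U V : ups Y) : almost_total p ->
  Up_map p (up_join U V) = up_join (Up_map p U) (Up_map p V).
Proof.
  intro hat; apply up_ext; intro x; simpl; split.
  - intro h; apply NNPP; intro n; apply not_or_and in n as [n1 n2].
    apply NNPP in n1 as [x1 [l1 [y1 [p1 u1]]]]; apply NNPP in n2 as [x2 [l2 [y2 [p2 u2]]]].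
    destruct (hat x x1 l1 (ex_intro _ y1 p1)) as [y py].
    apply h; exists x; split; [apply ple_refl |]; exists y; split; [exact py |].
    intros [hu | hv].
    + apply u1, (proj2_sig U y); [eapply op; eauto | exact hu].
    + apply u2, (proj2_sig V y); [eapply op; eauto | exact hv].
  - intros [h | h] [x' [l [y [pxy ny]]]]; apply h; exists x'; split; auto; exists y; tauto.
Qed.

Lemma Up_map_neg (U : ups Y) : neg_cond p -> Up_map p (up_neg U) = up_neg (Up_map p U).
Proof.
  intros [hcof hneg]; apply up_ext; intro x; simpl; split.
  - intros h [x' [l [hx' _]]].
    destruct (hcof x') as [w [lw hw]]; destruct (hw w (ple_refl _ w)) as [y py].
    apply h; exists w; split; [eapply ple_trans; eauto |]; exists y; split; [exact py |].
    intro nn; apply nn; exists y; split; [apply ple_refl |]; split; [| tauto].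
    apply NNPP; intro nu; apply hx'; exists w; split; [exact lw |]; exists y; auto.
  - intros h [x' [l [y [pxy nn]]]]; apply NNPP in nn as [y' [ly [uy _]]].
    destruct (hneg x' y y' pxy ly) as [z [b [lz [pzb lb]]]].
    apply h; exists z; split; [eapply ple_trans; eauto |]; split; [| tauto].
    intros [x3 [l3 [c [pc nc]]]]; apply nc, (proj2_sig U b); [eapply op; eauto |].
    exact (proj2_sig U y' b lb uy).
Qed.

Lemma Up_map_imp (U V : ups Y) : pos_cond p ->
  Up_map p (up_imp U V) = up_imp (Up_map p U) (Up_map p V).
Proof.
  intro hpos; apply up_ext; intro x; simpl; split.
  - intros h [x'' [l [h1 h2]]]; apply NNPP in h2 as [x' [l' [y [pxy ny]]]].
    apply h; exists x'; split; [eapply ple_trans; eauto |]; exists y; split; [exact pxy |].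
    intro nn; apply nn; exists y; split; [apply ple_refl |]; split; [| exact ny].
    apply NNPP; intro nu; apply h1; exists x'; split; [exact l' |]; exists y; auto.
  - intros h [x' [l [y [pxy nn]]]]; apply NNPP in nn as [y' [ly [uy ny]]].
    destruct (hpos x' y y' pxy ly) as [z [lz pz]].
    apply h; exists z; split; [eapply ple_trans; eauto |]; split.
    + intros [x3 [l3 [c [pc nc]]]]; apply nc, (proj2_sig U y'); [eapply op; eauto | exact uy].
    + intro hz; apply hz; exists z; split; [apply ple_refl |]; exists y'; auto.
Qed.

Lemma Up_map_inj (U V : ups Y) : psurjective p -> Up_map p U = Up_map p V -> U = V.
Proof.
  intros hsurj e.
  assert (hsub : forall U V : ups Y, Up_map p U = Up_map p V ->
                 forall y, proj1_sig U y -> proj1_sig V y).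
  { clear U V e; intros U V e y uy; apply NNPP; intro ny.
    destruct (hsurj y) as [x pxy].
    assert (hx : proj1_sig (Up_map p U) x).
    { intros [x' [l [y' [p' n']]]]; apply n', (proj2_sig U y); [eapply op; eauto | exact uy]. }
    rewrite e in hx; apply hx; exists x; split; [apply ple_refl |]; exists y; auto. }
  apply up_ext; intro y; split; apply hsub; auto.
Qed.

End UpMap.

Lemma Up_map_hom {k : kind} {X Y : poset} {p : X -> Y -> Prop} :
  in_Kd k p -> hom k (Up Y) (Up X) (Up_map p).
Proof.
  intros [_ [op hk]].
  assert (htot_at : total p -> almost_total p) by (intros ht x z _ _; apply ht).
  destruct k; simpl in hk |- *.
  - repeat split;
      [apply Up_map_meet | intro; apply Up_map_neg | apply Up_map_bot | apply Up_map_top]; auto.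
  - repeat split; [apply Up_map_meet | intros; apply Up_map_imp | apply Up_map_top]; auto.
  - destruct hk as [hneg hpos].
    repeat split;
      [apply Up_map_meet | intros; apply Up_map_imp | apply Up_map_bot | apply Up_map_top]; auto.
  - destruct hk as [ht hneg].
    repeat split; [apply Up_map_meet | intros; apply Up_map_join | intro; apply Up_map_neg
                  | apply Up_map_bot | apply Up_map_top]; auto.
  - destruct hk as [hat hpos].
    repeat split; [apply Up_map_meet | intros; apply Up_map_join | intros; apply Up_map_imp
                  | apply Up_map_top]; auto.
  - destruct hk as [ht [hneg hpos]].
    repeat split; [apply Up_map_meet | intros; apply Up_map_join | intros; apply Up_map_imp
                  | apply Up_map_bot | apply Up_map_top]; auto.
Qed.

Lemma in_K_semilattice {k : kind} {A : alg} : in_K k A -> semilattice A.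
Proof. destruct k; simpl; intro h; first [exact (proj1 h) | exact (proj1 (proj1 h))]. Qed.

Lemma hom_meet {k : kind} {A B : alg} {f : A -> B} :
  hom k A B f -> forall a b, f (meet A a b) = meet B (f a) (f b).
Proof. destruct k; simpl; intro h; exact (proj1 h). Qed.

Theorem proposition3p5 (k : kind) :
  (forall (A B : alg) (f : A -> B),
      in_K k A -> in_K k B -> hom k A B f ->
      in_Kd k (fstar f) /\
      ((forall a b : A, f a = f b -> a = b) -> psurjective (fstar f))) /\
  (forall (X Y : poset) (p : X -> Y -> Prop),
      in_Kd k p ->
      hom k (Up Y) (Up X) (Up_map p) /\
      (psurjective p -> forall U V : Up Y, Up_map p U = Up_map p V -> U = V)).
Proof.
  split.
  - intros A B f hA hB hf; split; [exact (fstar_in_Kd hA hB hf) |].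
    exact (fstar_psurjective (in_K_semilattice hA) (in_K_semilattice hB) (hom_meet hf)).
  - intros X Y p hp; split; [exact (Up_map_hom hp) |].
    intros hsurj U V; exact (Up_map_inj (proj1 (proj2 hp)) hsurj).
Qed.
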